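(* Let $n_1,n_2$ be positive integers with $n_1\ge n_2$. Let $C_1$ be a collection of $2^{3n_1}$ squares of the form $[i4^{-n_1},(i+1)4^{-n_1}]\times[j4^{-n_1},(j+1)4^{-n_1}]$ ($0\le i,j<4^{n_1}$) such that each column $[j4^{-n_1},(j+1)4^{-n_1}]\times[0,1]$, $j=0,\dots,4^{n_1}-1$, contains exactly $2^{n_1}$ squares of $C_1$. Then one can choose, inside each square of $C_1$, exactly $2^{n_2}$ of its $4^{2n_2}$ grid subsquares of side length $4^{-(n_1+n_2)}$, in such a way that every column $[j4^{-(n_1+n_2)},(j+1)4^{-(n_1+n_2)}]\times[0,1]$, $j=0,\dots,4^{n_1+n_2}-1$, contains at least one chosen subsquare. *)

From mathcomp Require Import all_boot.
Set Implicit Arguments. Unset Strict Implicit. Unset Printing Implicit Defensive.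

(* Grid squares of level n: a square [i 4^-n,(i+1)4^-n] x [j 4^-n,(j+1)4^-n]
   is encoded by the pair (i, j) : 'I_(4^n) * 'I_(4^n); i is the horizontal
   (x) index, so the square lies in column i. *)
Definition square (n : nat) := ('I_(4 ^ n) * 'I_(4 ^ n))%type.

Definition column (n : nat) (s : square n) : 'I_(4 ^ n) := s.1.

Definition subsquare_of (n1 n2 : nat) (t : square (n1 + n2)) (s : square n1) : bool :=
  ((t.1 : nat) %/ 4 ^ n2 == s.1) && ((t.2 : nat) %/ 4 ^ n2 == s.2).
Arguments subsquare_of : clear implicits.

From mathcomp Require Import all_boot.
Set Implicit Arguments. Unset Strict Implicit. Unset Printing Implicit Defensive.

(* Split each column of level n1 into its 4^n2 = 2^n2 * 2^n2 subcolumns,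
   grouped into 2^n2 blocks of 2^n2 consecutive ones.  The column contains
   2^n1 >= 2^n2 squares of C1; number them 0, 1, 2, ... and let the square
   numbered r (mod 2^n2) choose one subsquare in each subcolumn of block r
   (on the diagonal of its subgrid, say).  Every square then gets exactly
   2^n2 subsquares, and the squares numbered 0, ..., 2^n2 - 1 of each column
   together reach all of its subcolumns. *)

Section AppendDigit.
Variables m n : nat.

Lemma append_digit_subproof (i : 'I_m) (d : 'I_n) : i * n + d < m * n.
Proof.
by rewrite (leq_trans (_ : _ < i.+1 * n)) ?leq_mul2r ?ltn_ord ?orbT // mulSnr ltn_add2l.
Qed.

Definition append_digit (i : 'I_m) (d : 'I_n) : 'I_(m * n) :=
  Ordinal (append_digit_subproof i d).

Lemma append_digit_div i d : append_digit i d %/ n = i.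
Proof. by rewrite /= divnMDl ?divn_small ?addn0 // (leq_ltn_trans _ (ltn_ord d)). Qed.

Lemma append_digit_mod i d : append_digit i d %% n = d.
Proof. by rewrite /= modnMDl modn_small. Qed.

Lemma append_digit_inj i : injective (append_digit i).
Proof.
move=> d d' /(congr1 (fun k : 'I_(m * n) => k %% n)).
by rewrite !append_digit_mod => /val_inj.
Qed.

Lemma append_digitP (k : 'I_(m * n)) : exists i d, k = append_digit i d.
Proof.
have /andP[_ n_gt0] : (0 < m) && (0 < n).
  by rewrite -muln_gt0 (leq_ltn_trans _ (ltn_ord k)).
have lt_div : k %/ n < m by rewrite ltn_divLR.
exists (Ordinal lt_div), (Ordinal (ltn_pmod k n_gt0)).
by apply: val_inj; rewrite /= -divn_eq.
Qed.

End AppendDigit.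

Section Refinement.
Variables n1 n2 : nat.

Definition sub_index (i : 'I_(4 ^ n1)) (d : 'I_(4 ^ n2)) : 'I_(4 ^ (n1 + n2)) :=
  cast_ord (esym (expnD 4 n1 n2)) (append_digit i d).

Lemma sub_index_inj i : injective (sub_index i).
Proof. by move=> d d' /cast_ord_inj /append_digit_inj. Qed.

Lemma sub_indexP (J : 'I_(4 ^ (n1 + n2))) : exists i d, J = sub_index i d.
Proof.
have [i [d eJ]] := append_digitP (cast_ord (expnD 4 n1 n2) J).
by exists i, d; apply: val_inj; exact: (congr1 val eJ).
Qed.

Definition subsquare (s : square n1) (d : 'I_(4 ^ n2)) : square (n1 + n2) :=
  (sub_index s.1 d, sub_index s.2 d).

Lemma subsquare_ofP s d : subsquare_of n1 n2 (subsquare s d) s.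
Proof. by rewrite /subsquare_of !(append_digit_div (m := 4 ^ n1)) !eqxx. Qed.

Lemma subsquare_of_uniq t s s' :
  subsquare_of n1 n2 t s -> subsquare_of n1 n2 t s' -> s = s'.
Proof.
case/andP=> /eqP e1 /eqP e2 /andP[/eqP e1' /eqP e2'].
case: s s' e1 e2 e1' e2' => [i j] [i' j'] /= e1 e2 e1' e2'.
by congr pair; apply: ord_inj; [rewrite -e1 -e1' | rewrite -e2 -e2'].
Qed.

Lemma subsquare_inj s : injective (subsquare s).
Proof. by move=> d d' /(congr1 fst) /sub_index_inj. Qed.

End Refinement.

Section Selection.
Variables (n1 n2 : nat) (C1 : {set square n1}).

Definition column_rank (s : square n1) : nat :=
  index s (enum [set s' in C1 | column s' == column s]).

Lemma slot_subproof s : column_rank s %% 2 ^ n2 < 2 ^ n2.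
Proof. by rewrite ltn_mod expn_gt0. Qed.

Definition slot (s : square n1) : 'I_(2 ^ n2) := Ordinal (slot_subproof s).

Definition block_digit (q b : 'I_(2 ^ n2)) : 'I_(4 ^ n2) :=
  cast_ord (esym (expnMn 2 2 n2)) (append_digit q b).

Definition chosen_subsquare (s : square n1) (b : 'I_(2 ^ n2)) : square (n1 + n2) :=
  subsquare s (block_digit (slot s) b).

Definition selection : {set square (n1 + n2)} :=
  [set chosen_subsquare s b | s in C1, b in 'I_(2 ^ n2)].

Lemma selection_sub t :
  t \in selection -> exists2 s, s \in C1 & subsquare_of n1 n2 t s.
Proof. by case/imset2P=> s b sC1 _ ->; exists s => //; apply: subsquare_ofP. Qed.

Lemma selection_within s : s \in C1 ->
  [set t in selection | subsquare_of n1 n2 t s] =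
  [set chosen_subsquare s b | b : 'I_(2 ^ n2)].
Proof.
move=> sC1; apply/setP=> t; rewrite !inE; apply/andP/imsetP => [[]|[b _ ->]].
- case/imset2P=> s' b s'C1 _ -> /(subsquare_of_uniq (subsquare_ofP _ _)) eq_s.
  by exists b => //; rewrite eq_s.
- by split; [apply/imset2P; exists s b | apply: subsquare_ofP].
Qed.

Lemma card_selection_within s : s \in C1 ->
  #|[set t in selection | subsquare_of n1 n2 t s]| = 2 ^ n2.
Proof.
move=> sC1; rewrite selection_within // card_imset ?card_ord // => b b'.
by move/subsquare_inj/cast_ord_inj/append_digit_inj.
Qed.

Hypothesis column_large :
  forall j : 'I_(4 ^ n1), 2 ^ n2 <= #|[set s in C1 | column s == j]|.

Lemma slot_surj (j : 'I_(4 ^ n1)) (q : 'I_(2 ^ n2)) :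
  exists s, [/\ s \in C1, column s = j & slot s = q].
Proof.
set S := [set s in C1 | column s == j].
have q_lt : q < size (enum S) by rewrite -cardE (leq_trans _ (column_large j)).
set s := nth (j, j) (enum S) q.
have : s \in S by rewrite -mem_enum mem_nth.
rewrite inE => /andP[sC1 /eqP col_s]; exists s; split=> //.
apply: val_inj; rewrite /= /column_rank col_s -/S index_uniq ?enum_uniq //.
exact: modn_small.
Qed.

Lemma selection_covers (J : 'I_(4 ^ (n1 + n2))) :
  exists2 t, t \in selection & column t == J.
Proof.
have [j [d ->]] := sub_indexP J.
have [q [b e_d]] := append_digitP (cast_ord (expnMn 2 2 n2) d).
have [s [sC1 col_s slot_s]] := slot_surj j q.
exists (chosen_subsquare s b); first by apply/imset2P; exists s b.
rewrite /column /= -/(column s) col_s slot_s; apply/eqP; congr sub_index.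
by apply: val_inj; move/(congr1 val): e_d => /= ->.
Qed.

End Selection.

Theorem lemma3p1 (n1 n2 : nat) (hn2 : 0 < n2) (hn12 : n2 <= n1)
  (C1 : {set square n1})
  (hcard : #|C1| = 2 ^ (3 * n1))
  (hcol : forall j : 'I_(4 ^ n1), #|[set s in C1 | column s == j]| = 2 ^ n1) :
  exists D : {set square (n1 + n2)},
    (forall t, t \in D -> exists2 s, s \in C1 & subsquare_of n1 n2 t s) /\
    (forall s, s \in C1 -> #|[set t in D | subsquare_of n1 n2 t s]| = 2 ^ n2) /\
    (forall j : 'I_(4 ^ (n1 + n2)), exists2 t, t \in D & column t == j).
Proof.
have column_large j : 2 ^ n2 <= #|[set s in C1 | column s == j]|.
  by rewrite hcol leq_exp2l.
exists (selection n2 C1); split; [|split].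
- exact: selection_sub.
- exact: card_selection_within.
- exact: selection_covers.
Qed.
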